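(* Assume Schinzel's Hypothesis H. Then $\liminf_{n\to\infty} j(a_n)=1$; in particular there are infinitely many $n$ with $a_n-a_{n-1}\in A$.
   Context: Let $A$ be the set of positive integers $a$ such that $a^2+1$ is prime, enumerated in increasing order as $A=\{a_1<a_2<\cdots\}$. For $n\ge 2$, $j(a_n)$ denotes the smallest index $i$ with $1\le i\le n-1$ such that $a_n-a_{n-i}\in A$. A finite set of polynomials $f_1,\dots,f_r\in\mathbb{Z}[x]$ satisfies the Bunyakovsky condition if there is no prime $p$ such that $\prod_i f_i(a)\equiv 0 \pmod p$ for all $a\in\mathbb{F}_p$. Schinzel's Hypothesis H: if $f_1,\dots,f_r\in\mathbb{Z}[x]$ are irreducible polynomials with positive leading coefficients satisfying the Bunyakovsky condition, then there are infinitely many positive integers $x$ for which $f_1(x),\dots,f_r(x)$ are all prime. *)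

From mathcomp Require Import all_boot all_order all_algebra.
Set Implicit Arguments. Unset Strict Implicit. Unset Printing Implicit Defensive.
Import Order.TTheory GRing.Theory Num.Theory.

Definition inA (a : nat) : bool := (0 < a) && prime (a ^ 2 + 1).

(* The enumeration A = {a_1 < a_2 < ...}: [is_a n x] means a_n = x
   (1-indexed), i.e. x is in A and exactly n-1 elements of A are below x.
   Stated as a relation since A is not known (unconditionally) to be infinite. *)
Definition is_a (n x : nat) : Prop :=
  1 <= n /\ inA x /\ count inA (iota 0 x) = n.-1.

Definition is_j (n i : nat) : Prop :=
  2 <= n /\ 1 <= i <= n.-1 /\
  exists an, is_a n an /\
    (exists ani, is_a (n - i) ani /\ inA (an - ani)) /\
    (forall k, 1 <= k < i -> forall ank, is_a (n - k) ank -> ~~ inA (an - ank)).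

Local Open Scope ring_scope.

Definition irreducibleZ (f : {poly int}) : Prop :=
  f != 0 /\ f \isn't a GRing.unit /\
  forall g h : {poly int}, f = g * h -> g \is a GRing.unit \/ h \is a GRing.unit.

Definition bunyakovsky (fs : seq {poly int}) : Prop :=
  ~ exists p : nat, prime p /\
      forall a : nat, (a < p)%N -> (p%:Z %| \prod_(f <- fs) f.[a%:Z])%Z.

Definition primeZ (z : int) : bool := (0 < z) && prime `|z|%N.

Definition SchinzelH : Prop :=
  forall fs : seq {poly int},
    (forall f, f \in fs -> irreducibleZ f /\ 0 < lead_coef f) ->
    bunyakovsky fs ->
    forall N : nat, exists x : nat, (N < x)%N /\ forall f, f \in fs -> primeZ f.[x%:Z].

From mathcomp Require Import all_boot all_order all_algebra.
From mathcomp Require Import zify ring lra.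
Import Order.TTheory GRing.Theory Num.Theory.

Set Implicit Arguments.
Unset Strict Implicit.
Unset Printing Implicit Defensive.

(* Apply Hypothesis H to 4x^2 + 1 = (2x)^2 + 1 and 4x^2 + 8x + 5 = (2x+2)^2 + 1:
   for infinitely many x both 2x and 2x + 2 lie in A.  Since 2x + 1 is odd and
   larger than 1, (2x+1)^2 + 1 is even and larger than 2, so 2x and 2x + 2 are
   consecutive elements a_(n-1), a_n of A, and a_n - a_(n-1) = 2 is in A. *)

Local Open Scope ring_scope.

Lemma polyC_unit_of_coef_comb (R : idomainType) (c u v w : R) (p : {poly R}) :
  u * (c%:P * p)`_0 + v * (c%:P * p)`_1 + w * (c%:P * p)`_2 = 1 ->
  c%:P \is a GRing.unit.
Proof.
rewrite !coefCM => comb; apply: rmorph_unit; apply/GRing.unitrPr.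
by exists (u * p`_0 + v * p`_1 + w * p`_2); rewrite -comb; ring.
Qed.

Lemma linear_factors_disc_ge0 (R : realDomainType) (g h : {poly R}) :
  (size g <= 2)%N -> (size h <= 2)%N ->
  4 * (g * h)`_0 * (g * h)`_2 <= (g * h)`_1 ^+ 2.
Proof.
move=> sg sh; have g2 : g`_2 = 0 by rewrite nth_default.
have h2 : h`_2 = 0 by rewrite nth_default.
rewrite !coefM !big_ord_recr !big_ord0 !subn0 !subnn subn1 /= g2 h2.
rewrite -subr_ge0; set disc := _ - _.
have -> : disc = (g`_0 * h`_1 - g`_1 * h`_0) ^+ 2 by rewrite /disc; ring.
exact: sqr_ge0.
Qed.

(* The Bezout relation [comb] certifies that the content of f is 1. *)
Lemma irreducibleZ_quadratic (f : {poly int}) (u v w : int) :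
  size f = 3%N -> f`_1 ^+ 2 < 4 * f`_0 * f`_2 ->
  u * f`_0 + v * f`_1 + w * f`_2 = 1 -> irreducibleZ f.
Proof.
move=> sf disc comb; have f_neq0 : f != 0 by rewrite -size_poly_eq0 sf.
split=> //; split; first by rewrite poly_unitE sf.
move=> g h def_f; rewrite def_f in sf disc comb.
have [g_neq0 h_neq0] : g != 0 /\ h != 0.
  by apply/andP; rewrite -negb_or -mulf_eq0 -size_poly_eq0 sf.
have sgh := size_mul g_neq0 h_neq0; rewrite sf -subn1 in sgh.
have [sg1|sg2] := leqP (size g) 1.
  by left; rewrite (size1_polyC sg1) in comb *; apply: polyC_unit_of_coef_comb comb.
have [sh1|sh2] := leqP (size h) 1.
  right; rewrite (size1_polyC sh1) in comb *; rewrite [g * _]mulrC in comb.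
  exact: polyC_unit_of_coef_comb comb.
have [sg sh] : (size g <= 2 /\ size h <= 2)%N.
  by move: sgh sg2 sh2; set m := size g; set n := size h; lia.
by have := linear_factors_disc_ge0 sg sh; rewrite leNgt disc.
Qed.

(* 4 (X + m)^2 + 1 *)
Definition four_sqr_plus1 (m : int) : {poly int} := Poly [:: 4 * m ^+ 2 + 1; 8 * m; 4].

Lemma size_four_sqr_plus1 m : size (four_sqr_plus1 m) = 3%N.
Proof. by rewrite /four_sqr_plus1 (PolyK (c := 0)). Qed.

Lemma lead_coef_four_sqr_plus1 m : lead_coef (four_sqr_plus1 m) = 4.
Proof. by rewrite lead_coefE size_four_sqr_plus1 coef_Poly. Qed.

Lemma four_sqr_plus1_irreducibleZ m : irreducibleZ (four_sqr_plus1 m).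
Proof.
apply: (@irreducibleZ_quadratic _ 1 0 (- m ^+ 2)); rewrite ?size_four_sqr_plus1 //.
  rewrite !coef_Poly /=; lra.
rewrite !coef_Poly /=; ring.
Qed.

Lemma horner_four_sqr_plus1 (m x : nat) :
  (four_sqr_plus1 m).[x%:Z] = ((2 * (x + m)) ^ 2 + 1)%N%:Z.
Proof. rewrite /four_sqr_plus1 horner_Poly /=; lia. Qed.

(* At x = 0 the product is 5, and at x = 2 it is 17 * 37, prime to 5. *)
Lemma bunyakovsky_four_sqr_plus1 :
  bunyakovsky [:: four_sqr_plus1 0; four_sqr_plus1 1].
Proof.
case=> p [p_pr p_div].
have p5 : p = 5%N.
  have := p_div 0%N (prime_gt0 p_pr).
  rewrite !big_cons big_nil !(horner_four_sqr_plus1 _ 0) dvdzE /=.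
  by rewrite (dvdn_prime2 p_pr) // => /eqP.
subst p; have := p_div 2%N isT.
by rewrite !big_cons big_nil !(horner_four_sqr_plus1 _ 2).
Qed.

Lemma primeZ_natz (n : nat) : primeZ n%:Z -> prime n.
Proof. by case/andP. Qed.

Lemma schinzel_even_twins_inA : SchinzelH ->
  forall M : nat, exists x : nat, (M < x)%N /\ inA (2 * x) /\ inA (2 * x + 2).
Proof.
move=> schinzel M.
have fs_ok f : f \in [:: four_sqr_plus1 0; four_sqr_plus1 1] ->
    irreducibleZ f /\ 0 < lead_coef f.
  by rewrite !inE => /orP[]/eqP->; rewrite lead_coef_four_sqr_plus1;
     split=> //; apply: four_sqr_plus1_irreducibleZ.
have [x [ltMx fs_prime]] := schinzel _ fs_ok bunyakovsky_four_sqr_plus1 M.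
have := fs_prime _ (mem_head _ _); rewrite horner_four_sqr_plus1 => /primeZ_natz pr0.
have := fs_prime _ (mem_last _ [:: four_sqr_plus1 1]).
rewrite horner_four_sqr_plus1 => /primeZ_natz pr1.
exists x; split=> //; rewrite /inA.
by rewrite addn0 in pr0; rewrite mulnDr muln1 in pr1; rewrite pr0 pr1 !andbT; split; lia.
Qed.

Local Close Scope ring_scope.

Lemma inA_odd a : odd a -> inA a -> a = 1.
Proof.
move=> odd_a /andP[_ /even_prime[sqr_a|]]; last by rewrite oddD oddX odd_a.
by apply/eqP; rewrite -(eqn_exp2r _ _ (isT : 0 < 2)) -(eqn_add2r 1) sqr_a.
Qed.

Lemma count_iota_leq (P : pred nat) k m n :
  m <= n -> count P (iota k m) <= count P (iota k n).
Proof. by move=> le_mn; rewrite -(subnKC le_mn) iotaD count_cat leq_addr. Qed.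

Lemma count_iota_unbounded (P : pred nat) :
  (forall M, exists2 a, M <= a & P a) -> forall N, exists M, N <= count P (iota 0 M).
Proof.
move=> P_inf; elim=> [|N [M le_N_PM]]; first by exists 0.
have [a le_Ma Pa] := P_inf M; exists a.+1.
rewrite -[a.+1]addn1 iotaD count_cat /= Pa addn1 ltnS.
exact: leq_trans le_N_PM (count_iota_leq _ _ le_Ma).
Qed.

Lemma is_j1_of_consecutive a : inA a -> inA (a + 2) -> ~~ inA a.+1 ->
  is_j (count inA (iota 0 a)).+2 1.
Proof.
move=> Aa Aa2 notAa1.
have count_a2 : count inA (iota 0 (a + 2)) = (count inA (iota 0 a)).+1.
  by rewrite iotaD count_cat /= Aa (negbTE notAa1) addn1.
do 2!split=> //; exists (a + 2); split; first by [].
split=> [|k]; last by case: k => [|[]].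
by exists a; rewrite subn1 addKn.
Qed.

Theorem proposition3 :
  SchinzelH -> forall N : nat, exists n : nat, N <= n /\ is_j n 1.
Proof.
move=> schinzel N.
have A_unbounded M : exists2 a, M <= a & inA a.
  have [x [ltMx [A2x _]]] := schinzel_even_twins_inA schinzel M.
  by exists (2 * x) => //; lia.
have [M le_N_AM] := count_iota_unbounded A_unbounded N.
have [x [ltMx [A2x A2x2]]] := schinzel_even_twins_inA schinzel M.
have notA2x1 : ~~ inA (2 * x).+1.
  have odd_2x1 : odd (2 * x).+1 by rewrite /= oddM.
  by apply/negP => /(inA_odd odd_2x1); lia.
exists (count inA (iota 0 (2 * x))).+2; split; last exact: is_j1_of_consecutive.
have le_M_2x : M <= 2 * x by lia.
have := @count_iota_leq inA 0 _ _ le_M_2x; lia.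
Qed.
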